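(* Let $m,M\in\{0.01,0.02,\dots,0.99\}$ with $m\le M$ and $\varepsilon\in\{0,0.01,\dots,1.99,2\}\cup\{2.1,2.2,\dots,10\}\cup\{11,12,\dots,100\}$. For integers $N>1$, $J\subseteq[N]$, $a=(a_1,\dots,a_N)\in[m,M]^N$ and $z=(z_1,\dots,z_N)\in[m,M]^N$, let \[ g_{J,N}(a;z)=\Big(e^{-\varepsilon}+(1-e^{-\varepsilon})\frac{m+\sum_{i=1}^Na_i}{N+1}\Big)^{-1}\prod_{i\in J}\frac{N+1}{N+\frac{a_i}{z_i}}\prod_{i\in[N]\setminus J}\frac{N+1}{N+\frac{1-a_i}{1-z_i}}. \] Then \[ \sup_{N>1}\max_{J\subseteq[N]}\max_{a\in[m,M]^N}\max_{z\in[m,M]^N}g_{J,N}(a;z)=\max\Big\{\big(e^{-\varepsilon}+(1-e^{-\varepsilon})M\big)^{-1}e^{1-\frac{1-M}{1-m}},\ \big(e^{-\varepsilon}+(1-e^{-\varepsilon})m\big)^{-1}e^{1-\frac{m}{M}}\Big\}. \]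
   Context: $[N]=\{1,\dots,N\}$. *)

From HB Require Import structures.
From mathcomp Require Import all_boot all_order all_algebra.
From mathcomp Require Import all_classical all_reals.
From mathcomp Require Import all_analysis.
Set Implicit Arguments. Unset Strict Implicit. Unset Printing Implicit Defensive.
Import Order.TTheory GRing.Theory Num.Theory.
Local Open Scope ring_scope.

Definition eps_grid {R : realType} (eps : R) : Prop :=
  (exists j : nat, (j <= 200)%N /\ eps = j%:R / 100)
  \/ (exists j : nat, (21 <= j <= 100)%N /\ eps = j%:R / 10)
  \/ (exists j : nat, (11 <= j <= 100)%N /\ eps = j%:R).

Definition gJN {R : realType} (eps m : R) (N : nat) (J : {set 'I_N})
    (a z : 'I_N -> R) : R :=
  (expR (- eps) + (1 - expR (- eps)) * ((m + \sum_(i < N) a i) / (N%:R + 1)))^-1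
  * (\prod_(i in J) ((N%:R + 1) / (N%:R + a i / z i)))
  * (\prod_(i in ~: J) ((N%:R + 1) / (N%:R + (1 - a i) / (1 - z i)))).

From HB Require Import structures.
From mathcomp Require Import all_boot all_order all_algebra.
From mathcomp Require Import all_classical all_reals.
From mathcomp Require Import all_analysis.
From mathcomp Require Import ring lra zify.
Import Order.TTheory GRing.Theory Num.Theory.
Local Open Scope classical_set_scope.
Local Open Scope ring_scope.

(* Write a_i = m + t_i (M - m) with t_i in [0, 1], q = m / M, r = (1 - M) / (1 - m)
   and lgap N w = ln (N + 1) - ln (N + w).  By concavity of ln, a factor of g with
   index in J is at most exp ((1 - t_i) lgap N q), and one with index outside J at
   most exp (t_i lgap N r).  Hence g <= exp ((N - T) lgap N q + T lgap N r) / D with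
   T = sum t_i, where the denominator D is affine in T / N, and log-convexity reduces
   the bound to the endpoints T = 0 and T = N.  At T = 0, N lgap N q <= 1 - q gives
   the second term of the maximum.  At T = N the denominator is only the
   1/(N+1)-mixture of d + (1-d) m and d + (1-d) M (d = e^-eps), so the first-order
   bound e^(1-r) is not enough; the second-order estimate
   exp (N lgap N r) <= e^(1-r) (1 - (1-r) / (2 (N+1))) is what makes it work.
   Both terms of the maximum are approached as N grows, by J = [N], a = m, z = M
   and by J = {}, a = M, z = m. *)

Section LnConcavity.
Context {R : realType}.
Implicit Types (N P Q V a b q s t w x : R).

Lemma line_path_gt0 {a b t} : 0 < a -> 0 < b -> 0 <= t <= 1 -> 0 < line_path a b t.
Proof. by move=> a0 b0 /andP[t0 t1]; rewrite /line_path; nra. Qed.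

Lemma ln_le_subr1 x : 0 < x -> ln x <= x - 1.
Proof.
by move=> x0; have := @le_ln1Dx R (x - 1); rewrite [1 + _]addrC subrK; apply; lra.
Qed.

Lemma ln_line_path_ge {P Q t} : 0 < P -> 0 < Q -> 0 <= t <= 1 ->
  line_path (ln P) (ln Q) t <= ln (line_path P Q t).
Proof.
move=> P0 Q0 /andP[t0 t1].
by have := concave_ln (Itv01 t0 t1) Q0 P0; rewrite !convR_line_path.
Qed.

Lemma div_line_path_le_expR {P Q t} : 0 < P -> 0 < Q -> 0 <= t <= 1 ->
  Q / line_path P Q t <= expR ((1 - t) * (ln Q - ln P)).
Proof.
move=> P0 Q0 t01; have PQ0 := line_path_gt0 P0 Q0 t01.
rewrite -[Q / _]lnK ?posrE ?divr_gt0 // ler_expR ln_div ?posrE //.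
by have := ln_line_path_ge P0 Q0 t01; rewrite /line_path; lra.
Qed.

Lemma expR_line_path_div_le a b P Q V t : 0 < P -> 0 < Q -> 0 <= t <= 1 ->
  expR a / P <= V -> expR b / Q <= V -> expR (line_path a b t) / line_path P Q t <= V.
Proof.
move=> P0 Q0 t01 aP bQ; have /andP[t0 t1] := t01.
have V0 : 0 < V by apply: lt_le_trans aP; rewrite divr_gt0 ?expR_gt0.
have ln_bound (c D : R) : 0 < D -> expR c / D <= V -> c <= ln V + ln D.
  move=> D0; rewrite ler_pdivrMr // -lnM ?posrE // -ler_expR lnK //.
  by rewrite posrE mulr_gt0.
have PQ0 := line_path_gt0 P0 Q0 t01.
rewrite ler_pdivrMr // -[_ * _]lnK ?posrE ?mulr_gt0 // ler_expR lnM ?posrE //.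
have := ln_line_path_ge P0 Q0 t01; have := ln_bound _ _ P0 aP; have := ln_bound _ _ Q0 bQ.
rewrite /line_path; nra.
Qed.

Definition lgap N w : R := ln (N + 1) - ln (N + w).

Lemma lgap_ge0 N w : 0 <= N -> 0 < w <= 1 -> 0 <= lgap N w.
Proof. by move=> N0 /andP[w0 w1]; rewrite subr_ge0 ler_ln ?posrE; lra. Qed.

Lemma div_le_expR_lgap N q s w : 0 <= N -> 0 < q -> 0 <= s <= 1 ->
  line_path q 1 s <= w -> (N + 1) / (N + w) <= expR ((1 - s) * lgap N q).
Proof.
move=> N0 q0 s01 qw.
have Nq : 0 < N + q by lra.
have N1 : 0 < N + 1 by lra.
have PQ0 := line_path_gt0 Nq N1 s01.
apply: le_trans (div_line_path_le_expR Nq N1 s01).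
rewrite ler_pM2l // lef_pV2 ?posrE //; move: qw; rewrite /line_path; nra.
Qed.

Lemma mul_lgap_le N w : 0 <= N -> 0 < w <= 1 -> N * lgap N w <= 1 - w.
Proof.
move=> N0 /andP[w0 w1]; have Nw : 0 < N + w by lra.
have : lgap N w <= (1 - w) / (N + w).
  rewrite /lgap -ln_div ?posrE; try lra.
  have -> : (1 - w) / (N + w) = (N + 1) / (N + w) - 1 by field; rewrite gt_eqF.
  by apply: ln_le_subr1; rewrite divr_gt0 //; lra.
move=> /(ler_wpM2l N0) /le_trans; apply.
by rewrite mulrA ler_pdivrMr //; nra.
Qed.

Lemma expR_le_div_expn (n : nat) w : 0 < w <= 1 ->
  expR (1 - w) * (1 - (n%:R + 1)^-1) <= ((n%:R + 1) / (n%:R + w)) ^+ n.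
Proof.
move=> /andP[w0 w1]; set N := n%:R : R.
have N1 : 0 < N + 1 by rewrite ltr_wpDl.
have Nw : 0 < N + w by rewrite ltr_wpDl.
have lnQ : (1 - w) / (N + 1) <= ln ((N + 1) / (N + w)).
  have := ln_le_subr1 _ (divr_gt0 Nw N1).
  rewrite -[in ln _]invf_div lnV ?posrE ?divr_gt0 //.
  have -> : (N + w) / (N + 1) - 1 = - ((1 - w) / (N + 1)) by field; rewrite gt_eqF.
  lra.
have powQ : expR ((1 - w) / (N + 1)) ^+ n <= ((N + 1) / (N + w)) ^+ n.
  apply: lerXn2r; rewrite ?nnegrE ?expR_ge0 ?divr_ge0 //; try lra.
  by rewrite -[X in _ <= X]lnK ?posrE ?divr_gt0 // ler_expR.
apply: le_trans powQ; rewrite -expRM_natl -/N.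
have -> : N * ((1 - w) / (N + 1)) = (1 - w) - (1 - w) / (N + 1) by field; rewrite gt_eqF.
rewrite (expRD (1 - w)); apply: ler_wpM2l; first exact: expR_ge0.
apply: le_trans (expR_ge1Dx _).
have : (1 - w) / (N + 1) <= (N + 1)^-1 by rewrite ler_pdivrMr // mulVf ?gt_eqF //; lra.
lra.
Qed.

End LnConcavity.

Section SecondOrder.
Context {R : realType}.
Implicit Types (N r s w x : R).

(* The Taylor polynomial of -ln (1 - x) to order 4, with the last coefficient raised
   from 1/4 to 3/8 so that it dominates the whole tail for x <= 1/3. *)
Definition lnB_majorant : {poly R} :=
  'X + 2^-1 *: 'X^2 + 3^-1 *: 'X^3 + (3 / 8) *: 'X^4.

Lemma lnB_majorantE x :
  lnB_majorant.[x] = x + x ^+ 2 / 2 + x ^+ 3 / 3 + x ^+ 4 * (3 / 8).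
Proof. by rewrite /lnB_majorant !(hornerD, hornerZ, hornerXn, hornerX); field. Qed.

Lemma deriv_lnB_majorantE x :
  lnB_majorant^`().[x] = 1 + x + x ^+ 2 + 3 / 2 * x ^+ 3.
Proof.
rewrite /lnB_majorant !(derivD, derivZ, derivXn, derivX).
by rewrite !(hornerD, hornerZ, hornerXn, hornerX, hornerMn, hornerC) /=; field.
Qed.

Lemma invr1B_le_deriv_lnB_majorant w : 0 <= w <= 3^-1 ->
  (1 - w)^-1 <= lnB_majorant^`().[w].
Proof.
move=> /andP[w0 w3]; have w1 : 0 < 1 - w by lra.
have w30 : 0 <= w ^+ 3 by rewrite exprn_ge0.
rewrite deriv_lnB_majorantE -[X in X <= _]div1r ler_pdivrMr //.
have -> : (1 + w + w ^+ 2 + 3 / 2 * w ^+ 3) * (1 - w) = 1 + w ^+ 3 * (1 - 3 * w) / 2.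
  by rewrite !exprS expr0; field.
by rewrite lerDl; apply: divr_ge0 => //; apply: mulr_ge0; lra.
Qed.

Lemma oppr_ln1B_le s : 0 <= s <= 3^-1 -> - ln (1 - s) <= lnB_majorant.[s].
Proof.
move=> /andP[s0 s3].
have oneBX (t : R) : (1 - 'X).[t] = 1 - t by rewrite !hornerE.
pose phi : R -> R := @ln R + horner (lnB_majorant \Po (1 - 'X)).
have dphi (t : R) : 0 < t -> is_derive t 1 phi (t^-1 - lnB_majorant^`().[1 - t]).
  move=> t0; apply: is_deriveD; first exact: is_derive1_ln.
  have := is_derive_poly (lnB_majorant \Po (1 - 'X)) t.
  by rewrite deriv_comp derivB derivC derivX sub0r mulrN1 hornerN horner_comp oneBX.
have [c c_in phiE] : exists2 c, c \in `[1 - s, 1]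
    & phi 1 - phi (1 - s) = (c^-1 - lnB_majorant^`().[1 - c]) * (1 - (1 - s)).
  apply: MVT_segment; first lra.
    by move=> x; rewrite in_itv /= => /andP[x1 _]; apply: dphi; lra.
  apply: derivable_within_continuous => x; rewrite in_itv /= => /andP[x1 _].
  by have [] := dphi x ltac:(lra).
move: c_in; rewrite in_itv /= => /andP[c1 c2].
have := invr1B_le_deriv_lnB_majorant (1 - c) ltac:(apply/andP; split; lra).
rewrite subKr.
move: phiE; rewrite /phi !fctE !horner_comp !oneBX ln1 subrr subKr.
rewrite [lnB_majorant.[0]]lnB_majorantE expr0n mul0r !add0r; nra.
Qed.

(* With (N + 1) x = 1 the two sides agree up to x^2 / 24 + O(x^3): this is why the
   majorant has to be exact up to order 3. *)
Lemma lnB_majorant_comb_le N x : 0 <= N -> 0 <= x <= 3^-1 -> N * x <= 1 - x ->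
  N * lnB_majorant.[x] + lnB_majorant.[x / 2] <= (N + 1) * x.
Proof.
move=> N0 /andP[x0 x3] Nx.
set c := x / 2 + x ^+ 2 / 3 + x ^+ 3 * (3 / 8).
have c0 : 0 <= c by rewrite /c; nra.
have -> : lnB_majorant.[x] = x + x * c by rewrite lnB_majorantE /c; ring.
have Nxc : N * x * c <= (1 - x) * c by apply: ler_wpM2r.
have -> : lnB_majorant.[x / 2]
    = x - x ^+ 2 / 24 + x ^+ 3 / 12 - x ^+ 4 * (3 / 8 - 3 / 128) - (1 - x) * c.
  by rewrite lnB_majorantE /c; field.
have x2 : x ^+ 3 <= x ^+ 2 / 3 by rewrite [x ^+ 3]exprS [x ^+ 2]exprS expr1; nra.
have x4 : 0 <= x ^+ 4 by rewrite exprn_ge0.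
have x2_0 : 0 <= x ^+ 2 by rewrite exprn_ge0.
nra.
Qed.

Lemma expR_mul_lgap_le N r : 2 <= N -> 0 <= r <= 1 ->
  expR (N * lgap N r) <= expR (1 - r) * (1 - (N + 1)^-1 * (1 - r) / 2).
Proof.
move=> N2 /andP[r0 r1]; have N1 : 0 < N + 1 by lra.
set x := (1 - r) / (N + 1).
have x0 : 0 <= x by rewrite divr_ge0 //; lra.
have x3 : x <= 3^-1 by rewrite ler_pdivrMr // ler_pdivlMl //; lra.
have Nx : (N + 1) * x = 1 - r by rewrite /x; field; rewrite gt_eqF.
have x1 : 0 < 1 - x by lra.
have -> : lgap N r = - ln (1 - x).
  have -> : 1 - x = (N + r) / (N + 1) by rewrite /x; field; rewrite gt_eqF.
  rewrite /lgap -ln_div -?lnV ?invf_div ?posrE ?divr_gt0 //; lra.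
have -> : 1 - (N + 1)^-1 * (1 - r) / 2 = 1 - x / 2 by rewrite /x; field; rewrite gt_eqF.
rewrite -[1 - x / 2]lnK ?posrE; last lra.
rewrite -expRD ler_expR.
have x03 : 0 <= x <= 3^-1 by rewrite x0 x3.
have := oppr_ln1B_le x x03.
have := oppr_ln1B_le (x / 2) ltac:(apply/andP; split; lra).
have := lnB_majorant_comb_le N x ltac:(lra) x03 ltac:(nra).
nra.
Qed.

Lemma div_line_path_le_max (X Y q u lam P : R) :
  0 < X -> 0 < Y -> 0 <= q -> Y * q <= X -> 0 <= lam <= 1 ->
  P <= expR u * (1 - lam * u / 2) ->
  P / line_path Y X lam <= Num.max (expR u / Y) (expR (1 - q) / X).
Proof.
move=> X0 Y0 q0 YqX /andP[l0 l1] Pu; set W := Num.max _ _.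
have WY : expR u <= W * Y by rewrite -ler_pdivrMr // le_max lexx.
have WX : expR (1 - q) <= W * X by rewrite -ler_pdivrMr // le_max lexx orbT.
have W0 : 0 <= W by rewrite le_max (divr_ge0 (expR_ge0 u) (ltW Y0)).
(* W X dominates both e^(1-q) >= e^u (2 - q - u) and W Y q >= e^u q; average them. *)
have convex_exp : expR u * (2 - q - u) <= expR (1 - q).
  rewrite -[1 - q](subrK u) expRD mulrC ler_wpM2r ?expR_ge0 //.
  by apply: le_trans (expR_ge1Dx _); lra.
have WYq : expR u * q <= W * X.
  by apply: le_trans (ler_wpM2l W0 YqX); rewrite mulrA ler_wpM2r.
have half : expR u * (1 - u / 2) <= W * X by nra.
have LP0 : 0 < line_path Y X lam by rewrite line_path_gt0 //; apply/andP.
rewrite ler_pdivrMr //; apply: le_trans Pu _; rewrite /line_path; nra.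
Qed.

End SecondOrder.

Section Auxiliary.
Context {R : realType}.

Lemma factor_itv {m M x : R} : m <= x <= M ->
  0 <= factor m M x <= 1 /\ x = line_path m M (factor m M x).
Proof.
move=> /andP[mx xM]; have [eqmM|mM] := eqVneq m M.
  subst M; rewrite factor_flat line_path_flat /= lexx ler01.
  by split=> //; apply/eqP; rewrite eq_le mx xM.
have ltmM : 0 < M - m by rewrite subr_gt0 lt_neqAle mM; apply: le_trans xM.
rewrite factorK //; split=> //.
rewrite /factor divr_ge0 ?(ltW ltmM) ?subr_ge0 //= (ler_pdivrMr _ _ ltmM); lra.
Qed.

Lemma prod_setC_le_expR n (J : {set 'I_n}) (f g al be : 'I_n -> R) :
  (forall i, 0 <= f i <= expR (al i)) -> (forall i, 0 <= g i <= expR (be i)) ->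
  (forall i, 0 <= al i) -> (forall i, 0 <= be i) ->
  \prod_(i in J) f i * \prod_(i in ~: J) g i <= expR (\sum_i (al i + be i)).
Proof.
move=> f_le g_le al0 be0.
rewrite expR_sum [X in _ <= X](bigID (mem J)) /=.
rewrite [X in _ <= _ * X](eq_bigl (mem (~: J))); last by move=> i; rewrite !inE.
apply: ler_pM.
- by apply: prodr_ge0 => i _; have /andP[] := f_le i.
- by apply: prodr_ge0 => i _; have /andP[] := g_le i.
- apply: ler_prod => i _; have /andP[-> /le_trans ->] // := f_le i.
  by rewrite ler_expR lerDl.
- apply: ler_prod => i _; have /andP[-> /le_trans ->] // := g_le i.
  by rewrite ler_expR lerDr.
Qed.

Lemma sup_eq_approx (S : set R) (V : R) : (forall y, S y -> y <= V) ->
  (forall e, 0 < e -> exists2 y, S y & V - e < y) -> has_sup S /\ sup S = V.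
Proof.
move=> ubV approx.
have hS : has_sup S.
  split; last by exists V.
  by have [y Sy _] := approx 1 ltr01; exists y.
split=> //; apply/eqP; rewrite eq_le; apply/andP; split.
  by apply: ge_sup; [case: hS | exact: ubV].
rewrite leNgt; apply/negP => supV.
have [y Sy] := approx (V - sup S) ltac:(by rewrite subr_gt0).
by rewrite opprB addrCA subrr addr0 ltNge sup_upper_bound.
Qed.

Lemma exists_nat_mul1B_gt (V : R) {e : R} : 0 < e ->
  exists2 n : nat, (1 < n)%N & V - e < V * (1 - (n%:R + 1)^-1).
Proof.
move=> e0; exists (Num.truncn (`|V| / e)).+2 => //.
set n := (Num.truncn _).+2; have n1 : 0 < n%:R + 1 :> R by rewrite ltr_wpDl.
have Vn : `|V| / e < n%:R.
  by apply: lt_le_trans (truncnS_gt _) _; rewrite ler_nat /n.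
rewrite mulrBr mulr1 ltrD2l ltrN2 (le_lt_trans (ler_norm _)) //.
rewrite normf_div (gtr0_norm n1) ltr_pdivrMr //.
by rewrite ltr_pdivrMr // in Vn; nra.
Qed.

End Auxiliary.

Section GJNBounds.
Context {R : realType}.
Variables (eps m M : R).
Hypotheses (eps_ge0 : 0 <= eps) (m_gt0 : 0 < m) (m_le_M : m <= M) (M_lt1 : M < 1).

Local Notation d := (expR (- eps)).
Local Notation den_m := (d + (1 - d) * m).
Local Notation den_M := (d + (1 - d) * M).
Local Notation q := (m / M).
Local Notation r := ((1 - M) / (1 - m)).
Local Notation V := (Num.max (den_M^-1 * expR (1 - r)) (den_m^-1 * expR (1 - q))).

Let d_gt0 : 0 < d. Proof. exact: expR_gt0. Qed.
Let d_le1 : d <= 1. Proof. by rewrite expR_le1 oppr_le0. Qed.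
Let M_gt0 : 0 < M. Proof. exact: lt_le_trans m_le_M. Qed.
Let den_gt0 x : 0 < x -> 0 < d + (1 - d) * x.
Proof.
by move=> x0; apply: (ltr_wpDr _ d_gt0); apply: mulr_ge0; [rewrite subr_ge0 | exact: ltW].
Qed.
Let den_m_gt0 : 0 < den_m. Proof. exact: den_gt0. Qed.
Let den_M_gt0 : 0 < den_M. Proof. exact: den_gt0. Qed.
Let q01 : 0 < q <= 1. Proof. by rewrite divr_gt0 //= (ler_pdivrMr _ _ M_gt0) mul1r. Qed.
Let r01 : 0 < r <= 1.
Proof.
have m1 : 0 < 1 - m by rewrite subr_gt0 (le_lt_trans m_le_M).
have M1 : 0 < 1 - M by rewrite subr_gt0.
by rewrite divr_gt0 //= (ler_pdivrMr _ _ m1) mul1r lerD2l lerN2.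
Qed.
Let den_M_q : den_M * q <= den_m.
Proof.
have -> : den_M * q = d * q + (1 - d) * m by field; rewrite gt_eqF.
have /andP[_ q1] := q01; rewrite lerD2r ger_pMr //.
Qed.

Lemma gJN_termJ_le N a z t : 0 <= N -> m <= z <= M -> 0 <= t <= 1 ->
  a = line_path m M t -> (N + 1) / (N + a / z) <= expR ((1 - t) * lgap N q).
Proof.
move=> N0 /andP[mz zM] t01 ->; have /andP[t0 t1] := t01.
have a0 : 0 <= line_path m M t by have := m_gt0; have := m_le_M; rewrite /line_path; nra.
apply: div_le_expR_lgap => //; first by case/andP: q01.
have -> : line_path q 1 t = line_path m M t / M.
  by rewrite /line_path; field; rewrite gt_eqF.
have z0 : 0 < z := lt_le_trans m_gt0 mz.
by apply: ler_wpM2l => //; rewrite lef_pV2 ?posrE.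
Qed.

Lemma gJN_termC_le N a z t : 0 <= N -> m <= z <= M -> 0 <= t <= 1 ->
  a = line_path m M t -> (N + 1) / (N + (1 - a) / (1 - z)) <= expR (t * lgap N r).
Proof.
move=> N0 /andP[mz zM] t01 ->; have /andP[t0 t1] := t01.
have a1 : 0 <= 1 - line_path m M t.
  by have := M_lt1; have := m_le_M; rewrite /line_path; nra.
have /andP[r0 _] := r01.
have t'01 : 0 <= 1 - t <= 1 by apply/andP; split; lra.
have m1 : 0 < 1 - m by rewrite subr_gt0 (le_lt_trans m_le_M).
have z1 : 0 < 1 - z by rewrite subr_gt0 (le_lt_trans zM).
rewrite -[X in expR (X * _)](subKr 1); apply: div_le_expR_lgap => //.
have -> : line_path r 1 (1 - t) = (1 - line_path m M t) / (1 - m).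
  by rewrite /line_path; field; rewrite gt_eqF.
by apply: ler_wpM2l => //; rewrite lef_pV2 ?posrE // lerD2l lerN2.
Qed.

Lemma den_gJN_line_path {n} {a t : 'I_n -> R} : (0 < n)%N ->
  (forall i, a i = line_path m M (t i)) ->
  d + (1 - d) * ((m + \sum_i a i) / (n%:R + 1))
  = line_path den_m (line_path den_M den_m (n%:R + 1)^-1) ((\sum_i t i) / n%:R).
Proof.
move=> n0 aE; have N0 : 0 < n%:R :> R by rewrite ltr0n.
have N1 : 0 < n%:R + 1 :> R by rewrite ltr_wpDl.
rewrite (eq_bigr _ (fun i _ => aE i)) /line_path big_split /= -mulr_suml -mulr_suml.
rewrite sumrB sumr_const card_ord -mulr_natr.
by field; rewrite !gt_eqF.
Qed.

Lemma expR_lgap_q_div_le N : 0 <= N -> expR (N * lgap N q) / den_m <= V.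
Proof.
move=> N0; rewrite le_max [_^-1 * expR (1 - q)]mulrC; apply/orP; right.
apply: ler_wpM2r; first by rewrite invr_ge0 ltW.
by rewrite ler_expR mul_lgap_le.
Qed.

Lemma expR_lgap_r_div_le N : 2 <= N ->
  expR (N * lgap N r) / line_path den_M den_m (N + 1)^-1 <= V.
Proof.
move=> N2; have N1 : 0 < N + 1 by lra.
have lam01 : 0 <= (N + 1)^-1 <= 1 by rewrite invr_ge0 ltW //= invf_le1 //; lra.
have /andP[q0 _] := q01.
rewrite ![_^-1 * expR _]mulrC; apply: div_line_path_le_max => //; first exact: ltW.
by apply: expR_mul_lgap_le => //; have /andP[/ltW -> ->] := r01.
Qed.


Lemma gJN_le_max n (J : {set 'I_n}) (a z : 'I_n -> R) : (1 < n)%N ->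
  (forall i, m <= a i <= M) -> (forall i, m <= z i <= M) -> gJN eps m J a z <= V.
Proof.
move=> n1 a_in z_in; set N := n%:R : R.
have N2 : 2 <= N by rewrite (ler_nat R 2 n).
have N0 : 0 < N by apply: lt_le_trans N2.
have [t t01 aE] : exists2 t : 'I_n -> R,
    (forall i, 0 <= t i <= 1) & (forall i, a i = line_path m M (t i)).
  by exists (fun i => factor m M (a i)) => i; have [] := factor_itv (a_in i).
set T := \sum_i t i.
have T01 : 0 <= T / N <= 1.
  apply/andP; split.
    by rewrite divr_ge0 ?(ltW N0) // sumr_ge0 // => i _; case/andP: (t01 i).
  rewrite (ler_pdivrMr _ _ N0) mul1r.
  have -> : N = \sum_(i < n) 1 by rewrite sumr_const card_ord.
  by apply: ler_sum => i _; case/andP: (t01 i).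
have num : \prod_(i in J) ((N + 1) / (N + a i / z i))
    * \prod_(i in ~: J) ((N + 1) / (N + (1 - a i) / (1 - z i)))
  <= expR (line_path (N * lgap N q) (N * lgap N r) (T / N)).
  have -> : line_path (N * lgap N q) (N * lgap N r) (T / N)
      = \sum_i ((1 - t i) * lgap N q + t i * lgap N r).
    rewrite big_split /= -!mulr_suml sumrB sumr_const card_ord -/T -/N /line_path.
    by field; rewrite gt_eqF.
  have /andP[q0 q1] := q01; have /andP[r0 r1] := r01.
  apply: prod_setC_le_expR => i; have /andP[a1 a2] := a_in i; have /andP[z1 z2] := z_in i.
  - have a0 : 0 < a i by apply: lt_le_trans a1.
    have z0 : 0 < z i by apply: lt_le_trans z1.
    apply/andP; split; last exact: gJN_termJ_le (ltW N0) (z_in i) (t01 i) (aE i).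
    by apply: divr_ge0; [lra | apply: addr_ge0; [lra | apply: divr_ge0; lra]].
  - have a0 : 0 < 1 - a i by rewrite subr_gt0 (le_lt_trans a2).
    have z0 : 0 < 1 - z i by rewrite subr_gt0 (le_lt_trans z2).
    apply/andP; split; last exact: gJN_termC_le (ltW N0) (z_in i) (t01 i) (aE i).
    by apply: divr_ge0; [lra | apply: addr_ge0; [lra | apply: divr_ge0; lra]].
  - apply: mulr_ge0; last by apply: lgap_ge0; lra.
    by case/andP: (t01 i) => _; rewrite subr_ge0.
  - by apply: mulr_ge0; [case/andP: (t01 i) | apply: lgap_ge0; lra].
rewrite /gJN -/N -mulrA mulrC (den_gJN_line_path (ltnW n1) aE).
have lam01 : 0 <= (N + 1)^-1 <= 1 by rewrite invr_ge0 invf_le1; lra.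
have den_N_gt0 := line_path_gt0 den_M_gt0 den_m_gt0 lam01.
apply: le_trans (ler_wpM2r _ num) _.
  by rewrite invr_ge0 ltW // line_path_gt0.
apply: expR_line_path_div_le => //.
- exact: expR_lgap_q_div_le (ltW N0).
- exact: expR_lgap_r_div_le.
Qed.

Lemma gJN_set0_ge n :
  den_M^-1 * expR (1 - r) * (1 - (n%:R + 1)^-1)
  <= gJN eps m finset.set0 (fun _ : 'I_n => M) (fun _ => m).
Proof.
rewrite /gJN finset.big_set0 mulr1 finset.setC0 sumr_const card_ord.
rewrite prodr_const cardsT card_ord; set N := n%:R : R.
have N1 : 0 < N + 1 by rewrite ltr_wpDl.
have mean_gt0 : 0 < (m + M *+ n) / (N + 1).
  by rewrite divr_gt0 // ltr_wpDr // mulrn_wge0 // ltW.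
have mean_le : (m + M *+ n) / (N + 1) <= M.
  by rewrite ler_pdivrMr // -mulr_natl -/N; have := m_le_M; lra.
rewrite -mulrA; apply: ler_pM.
- by rewrite invr_ge0 ltW.
- by rewrite mulr_ge0 ?expR_ge0 // subr_ge0 invf_le1 // lerDr.
- rewrite lef_pV2 ?posrE ?den_gt0 // lerD2l; apply: ler_wpM2l => //.
  by rewrite subr_ge0.
- by apply: expR_le_div_expn; case/andP: r01 => /[swap] -> ->.
Qed.

Lemma gJN_setT_ge n :
  den_m^-1 * expR (1 - q) * (1 - (n%:R + 1)^-1)
  <= gJN eps m [set: 'I_n]%SET (fun _ => m) (fun _ => M).
Proof.
rewrite /gJN finset.setCT finset.big_set0 mulr1 sumr_const card_ord.
rewrite prodr_const cardsT card_ord; set N := n%:R : R.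
have N1 : 0 < N + 1 by rewrite ltr_wpDl.
have -> : (m + m *+ n) / (N + 1) = m by rewrite -mulr_natl; field; rewrite gt_eqF.
rewrite -mulrA; apply: ler_wpM2l; first by rewrite invr_ge0 ltW.
by apply: expR_le_div_expn; case/andP: q01 => /[swap] -> ->.
Qed.

Lemma gJN_approx_max n : exists (J : {set 'I_n}) (a z : 'I_n -> R),
  [/\ forall i, m <= a i <= M, forall i, m <= z i <= M
    & V * (1 - (n%:R + 1)^-1) <= gJN eps m J a z].
Proof.
have mM : m <= m <= M by rewrite lexx.
have MM : m <= M <= M by rewrite lexx andbT.
have [_|_] := leP (den_M^-1 * expR (1 - r)) (den_m^-1 * expR (1 - q)).
- exists [set: 'I_n]%SET, (fun=> m), (fun=> M).
  by split=> [_|_|] //; exact: gJN_setT_ge.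
- exists finset.set0, (fun=> M), (fun=> m).
  by split=> [_|_|] //; exact: gJN_set0_ge.
Qed.

End GJNBounds.

Theorem theorem6 (R : realType) (km kM : nat) (eps : R) :
  (1 <= km)%N -> (km <= kM)%N -> (kM <= 99)%N -> eps_grid eps ->
  let m : R := km%:R / 100 in
  let M : R := kM%:R / 100 in
  let S := [set y : R | exists (N : nat) (_ : (1 < N)%N) (J : {set 'I_N})
                           (a z : 'I_N -> R),
              (forall i, m <= a i <= M) /\ (forall i, m <= z i <= M) /\
              y = gJN eps m J a z] in
  has_sup S /\
  sup S = Num.max
    ((expR (- eps) + (1 - expR (- eps)) * M)^-1 * expR (1 - (1 - M) / (1 - m)))
    ((expR (- eps) + (1 - expR (- eps)) * m)^-1 * expR (1 - m / M)).
Proof.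
move=> km1 kmM kM99 eps_grid_eps m M S.
have m_gt0 : 0 < m by rewrite divr_gt0 ?ltr0n.
have m_le_M : m <= M by rewrite ler_pM2r ?invr_gt0 ?ltr0n // ler_nat.
have M_lt1 : M < 1 by rewrite ltr_pdivrMr ?ltr0n // mul1r ltr_nat; lia.
have eps_ge0 : 0 <= eps.
  by case: eps_grid_eps => [[j [_ ->]]|[[j [_ ->]]|[j [_ ->]]]]; rewrite ?divr_ge0.
apply: sup_eq_approx => [_ [n [n1 [J [a [z [a_in [z_in ->]]]]]]]|e e0].
  exact: gJN_le_max.
set V := Num.max _ _; have [n n1 Ve] := exists_nat_mul1B_gt V e0.
have [J [a [z [a_in z_in Vg]]]] := gJN_approx_max eps m M eps_ge0 m_gt0 m_le_M M_lt1 n.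
by exists (gJN eps m J a z); [exists n, n1, J, a, z | exact: lt_le_trans Ve Vg].
Qed.
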